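(* Let $\mathbf{A}',\mathbf{A}'',\mathbf{B}',\mathbf{B}''$ be $n\times n$ Hermitian non-negative definite matrices such that either $\mathbf{A}'\neq\mathbf{A}''$ or $\mathbf{B}'\neq\mathbf{B}''$. Assume that the Loewner order is total on each of the pairs $(\mathbf{A}',\mathbf{A}'')$ and $(\mathbf{B}',\mathbf{B}'')$, i.e., either $\mathbf{A}'\succeq\mathbf{A}''$ or $\mathbf{A}''\succ\mathbf{A}'$, and either $\mathbf{B}'\succeq\mathbf{B}''$ or $\mathbf{B}''\succ\mathbf{B}'$. Define $\mathbf{M}=(\mathbf{A}''-\mathbf{A}')\left[(\mathbf{I}+\mathbf{A}')^{-1}-(\mathbf{I}+\mathbf{A}'')^{-1}\right]$ and $\mathbf{N}=(\mathbf{B}''-\mathbf{B}')\left[(\mathbf{I}+\mathbf{B}'+\mathbf{A}')^{-1}-(\mathbf{I}+\mathbf{B}''+\mathbf{A}'')^{-1}\right]$. Then $\mathrm{Tr}(\mathbf{M}+\mathbf{N})\ge 0$.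
   Context: $\succeq$ denotes the Loewner order on Hermitian matrices: $\mathbf{X}\succeq\mathbf{Y}$ iff $\mathbf{X}-\mathbf{Y}$ is positive semidefinite; $\mathbf{X}\succ\mathbf{Y}$ iff $\mathbf{X}-\mathbf{Y}$ is positive definite. *)

From mathcomp Require Import all_boot all_order all_algebra.
Set Implicit Arguments. Unset Strict Implicit. Unset Printing Implicit Defensive.
Import Order.TTheory GRing.Theory Num.Theory.
Local Open Scope ring_scope.

(* Scalars: an arbitrary numeric algebraically closed field C (e.g. algC or
   R[i]); on C, [0 <= x] means x is real and non-negative. *)

Definition ctrmx (C : numClosedFieldType) (m n : nat) (A : 'M[C]_(m, n)) : 'M[C]_(n, m) :=
  map_mx Num.conj (A^T).

Definition hermitian (C : numClosedFieldType) (n : nat) (A : 'M[C]_n) : Prop :=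
  ctrmx A = A.

Definition psd (C : numClosedFieldType) (n : nat) (A : 'M[C]_n) : Prop :=
  hermitian A /\ forall v : 'cV[C]_n, 0 <= (ctrmx v *m A *m v) 0 0.

Definition pd (C : numClosedFieldType) (n : nat) (A : 'M[C]_n) : Prop :=
  hermitian A /\ forall v : 'cV[C]_n, v != 0 -> 0 < (ctrmx v *m A *m v) 0 0.

Definition loewner_ge (C : numClosedFieldType) (n : nat) (X Y : 'M[C]_n) : Prop :=
  psd (X - Y).
Definition loewner_gt (C : numClosedFieldType) (n : nat) (X Y : 'M[C]_n) : Prop :=
  pd (X - Y).

From Pilot Require Import Defs.
From mathcomp Require Import all_boot all_order all_algebra ring.
Import Order.TTheory GRing.Theory Num.Theory.
Local Open Scope ring_scope.
Set Implicit Arguments. Unset Strict Implicit. Unset Printing Implicit Defensive.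

(** Write X = I + A', Y = I + A'', P = X + B', Q = Y + B'', D = Y - X and
    E = B'' - B', so that Tr M = a := Tr(D X^-1 D Y^-1) and, by the resolvent
    identity, Tr N = T := Tr(E P^-1 (D + E) Q^-1) = Tr(E Q^-1 (D + E) P^-1).
    Expanding the trace of (2E + D) P^-1 (2E + D) Q^-1, which is non-negative
    as the trace of a product of two positive semidefinite matrices, gives
    4 T + d with d := Tr(D P^-1 D Q^-1).  Finally
    a - d = Tr((X^-1 - P^-1) D Y^-1 D) + Tr(D P^-1 D (Y^-1 - Q^-1)) >= 0
    because P >= X, Q >= Y and inversion is antitone, whence
    4 (a + T) = 3 a + (a - d) + (4 T + d) >= 0. *)

Section ConjugateTranspose.
Variable C : numClosedFieldType.

Lemma ctrmx_mul m n p (A : 'M[C]_(m, n)) (B : 'M[C]_(n, p)) :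
  ctrmx (A *m B) = ctrmx B *m ctrmx A.
Proof. by rewrite /ctrmx trmx_mul map_mxM. Qed.

Lemma ctrmxK m n (A : 'M[C]_(m, n)) : ctrmx (ctrmx A) = A.
Proof. exact: trmxCK. Qed.

Lemma ctrmxD m n (A B : 'M[C]_(m, n)) : ctrmx (A + B) = ctrmx A + ctrmx B.
Proof. by rewrite /ctrmx linearD map_mxD. Qed.

Lemma ctrmxN m n (A : 'M[C]_(m, n)) : ctrmx (- A) = - ctrmx A.
Proof. by rewrite /ctrmx linearN map_mxN. Qed.

Lemma ctrmx1 n : ctrmx (1%:M : 'M[C]_n) = 1%:M.
Proof. by rewrite /ctrmx trmx1 map_mx1. Qed.

Lemma ctrmx_inv n (A : 'M[C]_n) : ctrmx (invmx A) = invmx (ctrmx A).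
Proof. by rewrite /ctrmx trmx_inv map_invmx. Qed.

Lemma ctrmx_eq0 m n (A : 'M[C]_(m, n)) : (ctrmx A == 0) = (A == 0).
Proof. by rewrite /ctrmx map_mx_eq0 trmx_eq0. Qed.

Lemma ctrmx_mul_self n (v : 'cV[C]_n) : (ctrmx v *m v) 0 0 = \sum_i `|v i 0| ^+ 2.
Proof. by rewrite mxE; apply: eq_bigr => i _; rewrite !mxE normCK mulrC. Qed.

End ConjugateTranspose.

Section ResolventIdentity.
Variables (R : comUnitRingType) (n : nat).
Implicit Types U V : 'M[R]_n.

Lemma invmx_sub U V : U \in unitmx -> V \in unitmx ->
  invmx U - invmx V = invmx U *m (V - U) *m invmx V.
Proof. by move=> uU uV; rewrite mulmxBr mulmxBl mulVmx // mulmxK // mul1mx. Qed.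

Lemma invmx_sub_sym U V : U \in unitmx -> V \in unitmx ->
  invmx U - invmx V = invmx V *m (V - U) *m invmx U.
Proof. by move=> uU uV; rewrite mulmxBr mulmxBl mulmxK // mulVmx // mul1mx. Qed.

End ResolventIdentity.

Section PositiveDefinite.
Variables (C : numClosedFieldType) (n : nat).
Implicit Types (A B G K S T X : 'M[C]_n).

Lemma hermitianD A B : Defs.hermitian A -> Defs.hermitian B -> Defs.hermitian (A + B).
Proof. by rewrite /Defs.hermitian ctrmxD => -> ->. Qed.

Lemma hermitianB A B : Defs.hermitian A -> Defs.hermitian B -> Defs.hermitian (A - B).
Proof. by rewrite /Defs.hermitian ctrmxD ctrmxN => -> ->. Qed.

Lemma psd_hermitian A : psd A -> Defs.hermitian A.
Proof. by case. Qed.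

Lemma psdD A B : psd A -> psd B -> psd (A + B).
Proof.
move=> [hA pA] [hB pB]; split; first exact: hermitianD.
by move=> v; rewrite mulmxDr mulmxDl mxE addr_ge0.
Qed.

Lemma psd_congr m (S : 'M[C]_m) (Z : 'M[C]_(m, n)) : psd S -> psd (ctrmx Z *m S *m Z).
Proof.
move=> [hS pS]; split; first by rewrite /Defs.hermitian !ctrmx_mul ctrmxK hS mulmxA.
by move=> v; have := pS (Z *m v); rewrite ctrmx_mul !mulmxA.
Qed.

Lemma psd_diag_ge0 A i : psd A -> 0 <= A i i.
Proof.
move=> [_ pA]; have := pA (delta_mx i 0).
by rewrite /ctrmx trmx_delta map_delta_mx -rowE -colE !mxE.
Qed.

Lemma pd1 : pd (1%:M : 'M[C]_n).
Proof.
split=> [|v v_neq0]; first exact: ctrmx1.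
rewrite mulmx1 ctrmx_mul_self lt_def sumr_ge0 ?andbT => [|i _]; last first.
  exact: exprn_ge0.
apply: contra v_neq0; rewrite psumr_eq0 => [/allP v0|i _]; last exact: exprn_ge0.
apply/eqP/matrixP => i j; rewrite ord1 mxE.
have := v0 i (mem_index_enum _); rewrite /= sqrf_eq0 normr_eq0.
by move/eqP.
Qed.

Lemma pd_psd A : pd A -> psd A.
Proof.
move=> [hA pA]; split=> // v; have [->|v_neq0] := eqVneq v 0; last exact/ltW/pA.
by rewrite mulmx0 mxE.
Qed.

Lemma pdD A B : pd A -> psd B -> pd (A + B).
Proof.
move=> [hA pA] [hB pB]; split; first exact: hermitianD.
by move=> v v_neq0; rewrite mulmxDr mulmxDl mxE ltr_wpDr ?pA.
Qed.

Lemma pd_unit A : pd A -> A \in unitmx.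
Proof.
move=> [_ pA]; rewrite unitmxE unitfE; apply/negP => /det0P[v v_neq0 vA].
have := pA (ctrmx v); rewrite ctrmx_eq0 ctrmxK vA mul0mx mxE ltxx.
by move/(_ v_neq0).
Qed.

Lemma psd_invmx X : pd X -> psd (invmx X).
Proof.
move=> pX; have uX := pd_unit pX; have [hX _] := pX.
have -> : invmx X = ctrmx (invmx X) *m X *m invmx X.
  by rewrite ctrmx_inv hX mulVmx ?mul1mx.
exact/psd_congr/pd_psd.
Qed.

Lemma psd_sandwich_invmx G X : Defs.hermitian G -> pd X -> psd (G *m invmx X *m G).
Proof. by move=> hG pX; rewrite -{1}hG; apply/psd_congr/psd_invmx. Qed.

(** [X^-1 - (X + K)^-1 = P^-1 K P^-1 + (P^-1 K) X^-1 (K P^-1)] with [P = X + K]. *)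
Lemma psd_sub_invmx X K : pd X -> psd K -> psd (invmx X - invmx (X + K)).
Proof.
move=> pX pK; have pP := pdD pX pK.
have uX := pd_unit pX; have uP := pd_unit pP.
have [[hP _] [hK _]] := (pP, pK).
set P := X + K in pP uP hP *.
have hPi : Defs.hermitian (invmx P) by rewrite /Defs.hermitian ctrmx_inv hP.
have -> : invmx X - invmx P =
    invmx P *m K *m invmx P + (invmx P *m K) *m invmx X *m (K *m invmx P).
  rewrite invmx_sub_sym // addrC addKr -[LHS]mulmx1 -(mulmxV uP) {2}/P.
  by rewrite mulmxDl mulmxDr !mulmxA mulmxKV.
apply: psdD; first by rewrite -{1}hPi; apply: psd_congr.
have -> : invmx P *m K = ctrmx (K *m invmx P) by rewrite ctrmx_mul hPi hK.
exact/psd_congr/psd_invmx.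
Qed.

Lemma mxtrace_mul_psd_ge0 S T : psd S -> psd T -> 0 <= \tr (S *m T).
Proof.
move=> pS pT; have /orthomx_spectralP : S \is normalmx.
  by apply/normalmxP; rewrite [(S ^t* )%sesqui]psd_hermitian.
set U := spectralmx S; set l := spectral_diag S => defS.
have uU := spectral_unitarymx S; have uU' := unitarymx_unit uU.
have -> : \tr (S *m T) = \tr (diag_mx l *m (U *m T *m invmx U)).
  by rewrite defS -!mulmxA mxtrace_mulC !mulmxA.
rewrite mul_diag_mx /mxtrace; apply: sumr_ge0 => i _; rewrite mxE invmx_unitary //.
have -> : l 0 i = (U *m S *m (U ^t* )%sesqui) i i.
  by rewrite -invmx_unitary // defS !mulmxA mulmxV ?mulmxK ?mul1mx // mxE eqxx mulr1n.
have psd_conjU A : psd A -> psd (U *m A *m (U ^t* )%sesqui).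
  by move=> pA; have := psd_congr (ctrmx U) pA; rewrite ctrmxK.
by rewrite mulr_ge0 // psd_diag_ge0 //; apply: psd_conjU.
Qed.

End PositiveDefinite.

Section TraceIdentities.
Variables (R : comNzRingType) (n : nat).
Implicit Types D E P Q X Y : 'M[R]_n.

Lemma mxtrace_mul4_rot2 D E P Q : \tr (D *m E *m P *m Q) = \tr (P *m Q *m D *m E).
Proof. by rewrite -(mulmxA (D *m E)) mxtrace_mulC !mulmxA. Qed.

Lemma mxtrace_mul4_rot1 D E P Q : \tr (D *m E *m P *m Q) = \tr (E *m P *m Q *m D).
Proof. by rewrite -!mulmxA mxtrace_mulC !mulmxA. Qed.

Lemma mxtrace_sandwich_expand D E P Q :
  \tr ((E *+ 2 + D) *m P *m (E *+ 2 + D) *m Q) =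
  \tr (E *m P *m (D + E) *m Q) *+ 2 + \tr (E *m Q *m (D + E) *m P) *+ 2
    + \tr (D *m P *m D *m Q).
Proof.
rewrite mulr2n !(mulmxDl, mulmxDr, mxtraceD).
by rewrite (mxtrace_mul4_rot2 E Q D P) (mxtrace_mul4_rot2 E Q E P); ring.
Qed.

Lemma mxtrace_sandwich_sub D X Y P Q :
  \tr (D *m X *m D *m Y) - \tr (D *m P *m D *m Q) =
  \tr ((X - P) *m (D *m Y *m D)) + \tr ((D *m P *m D) *m (Y - Q)).
Proof.
rewrite !(mulmxBl, mulmxBr, mxtraceD, linearB) /= !mulmxA.
by rewrite (mxtrace_mul4_rot1 D X D Y) (mxtrace_mul4_rot1 D P D Y); ring.
Qed.

End TraceIdentities.

Lemma mxtrace_resolvent_ge0 (C : numClosedFieldType) (n : nat) (X Y B1 B2 : 'M[C]_n) :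
  pd X -> pd Y -> psd B1 -> psd B2 ->
  0 <= \tr ((Y - X) *m (invmx X - invmx Y))
       + \tr ((B2 - B1) *m (invmx (X + B1) - invmx (Y + B2))).
Proof.
move=> pX pY pB1 pB2; have [pP pQ] := (pdD pX pB1, pdD pY pB2).
set P := X + B1 in pP *; set Q := Y + B2 in pQ *.
set D := Y - X; set E := B2 - B1.
have uX := pd_unit pX; have uY := pd_unit pY.
have uP := pd_unit pP; have uQ := pd_unit pQ.
have hD : Defs.hermitian D by apply: hermitianB; [case: pY | case: pX].
have hE : Defs.hermitian E by apply: hermitianB; [case: pB2 | case: pB1].
have QP : Q - P = D + E by rewrite opprD addrACA.
have -> : \tr (D *m (invmx X - invmx Y)) = \tr (D *m invmx X *m D *m invmx Y).
  by rewrite invmx_sub // !mulmxA.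
set a := \tr (D *m _ *m _ *m _); set T := \tr (E *m _).
have a_ge0 : 0 <= a := mxtrace_mul_psd_ge0 (psd_sandwich_invmx hD pX) (psd_invmx pY).
have hG : Defs.hermitian (E *+ 2 + D).
  by rewrite mulr2n; apply: hermitianD => //; apply: hermitianD.
have f_ge0 : 0 <= \tr ((E *+ 2 + D) *m invmx P *m (E *+ 2 + D) *m invmx Q) :=
  mxtrace_mul_psd_ge0 (psd_sandwich_invmx hG pP) (psd_invmx pQ).
have u_ge0 : 0 <= \tr ((invmx X - invmx P) *m (D *m invmx Y *m D)) :=
  mxtrace_mul_psd_ge0 (psd_sub_invmx pX pB1) (psd_sandwich_invmx hD pY).
have w_ge0 : 0 <= \tr ((D *m invmx P *m D) *m (invmx Y - invmx Q)) :=
  mxtrace_mul_psd_ge0 (psd_sandwich_invmx hD pP) (psd_sub_invmx pY pB2).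
have expand := mxtrace_sandwich_expand D E (invmx P) (invmx Q).
have sub := mxtrace_sandwich_sub D (invmx X) (invmx Y) (invmx P) (invmx Q).
have TPQ : T = \tr (E *m invmx P *m (D + E) *m invmx Q).
  by rewrite /T invmx_sub // QP !mulmxA.
have TQP : T = \tr (E *m invmx Q *m (D + E) *m invmx P).
  by rewrite /T invmx_sub_sym // QP !mulmxA.
rewrite -TPQ -TQP in expand.
have : (a + T) *+ 4 = a *+ 3 + (a - \tr (D *m invmx P *m D *m invmx Q))
                      + \tr ((E *+ 2 + D) *m invmx P *m (E *+ 2 + D) *m invmx Q).
  by rewrite expand; ring.
by rewrite sub -(pmulrn_lge0 _ (isT : 0 < 4)%N) => ->; rewrite !addr_ge0 ?mulrn_wge0.
Qed.

Unset Implicit Arguments.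

Theorem lemma1 (C : numClosedFieldType) (n : nat) (A1 A2 B1 B2 : 'M[C]_n) :
  psd A1 -> psd A2 -> psd B1 -> psd B2 ->
  (A1 <> A2 \/ B1 <> B2) ->
  (loewner_ge A1 A2 \/ loewner_gt A2 A1) ->
  (loewner_ge B1 B2 \/ loewner_gt B2 B1) ->
  let M := (A2 - A1) *m (invmx (1%:M + A1) - invmx (1%:M + A2)) in
  let N := (B2 - B1) *m (invmx (1%:M + B1 + A1) - invmx (1%:M + B2 + A2)) in
  0 <= \tr (M + N).
Proof.
move=> pA1 pA2 pB1 pB2 _ _ _ /=.
rewrite (addrAC 1%:M B1) (addrAC 1%:M B2) mxtraceD.
have -> : A2 - A1 = (1%:M + A2) - (1%:M + A1) by rewrite opprD addrACA subrr add0r.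
by apply: mxtrace_resolvent_ge0 => //; apply: pdD => //; apply: pd1.
Qed.
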